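(* Let $P_0,P_1,P_2\in\mathbb H$ be distinct, and let $\alpha:=-1+\langle P_0,P_1\rangle+\langle P_1,P_2\rangle+\langle P_2,P_0\rangle$ and $\chi:=\langle P_0\tilde\times P_1,P_2\rangle$. Let $Q_0,Q_2\in\mathbb H$ be such that $P_0P_1Q_2$ and $P_1P_2Q_0$ are equilateral, and let $R_2$, $R_0$ be the centroids of $P_0P_1Q_2$ and $P_1P_2Q_0$ respectively; let $\varepsilon_0,\varepsilon_2\in\{-1,1\}$ be the signs with $$R_2=\frac{\sqrt{1-2\langle P_0,P_1\rangle}(P_0+P_1)+\varepsilon_2P_0\tilde\times P_1}{\sqrt3(1-\langle P_0,P_1\rangle)},\quad R_0=\frac{\sqrt{1-2\langle P_1,P_2\rangle}(P_1+P_2)+\varepsilon_0P_1\tilde\times P_2}{\sqrt3(1-\langle P_1,P_2\rangle)}.$$ Then $$\begin{aligned}&3(1-\langle P_0,P_1\rangle)(1-\langle P_1,P_2\rangle)\langle R_2,R_0\rangle=\alpha\sqrt{1-2\langle P_0,P_1\rangle}\sqrt{1-2\langle P_1,P_2\rangle}\\&\quad+\chi\Bigl(\varepsilon_0\sqrt{1-2\langle P_0,P_1\rangle}+\varepsilon_2\sqrt{1-2\langle P_1,P_2\rangle}\Bigr)-\varepsilon_2\varepsilon_0\bigl(\langle P_0,P_1\rangle\langle P_1,P_2\rangle+\langle P_0,P_2\rangle\bigr).\end{aligned}$$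
   Context: $\langle v,w\rangle=-v_1w_1+v_2w_2+v_3w_3$ on $\mathbb R^3$; $\mathbb H=\{P\in\mathbb R^3:\langle P,P\rangle=-1,\ P_1\ge1\}$; $v\tilde\times w:=J(v\times w)$ with $J=\mathrm{diag}(-1,1,1)$ and $\times$ the Euclidean cross product. A triangle $ABC$ in $\mathbb H$ is equilateral if $\langle A,B\rangle=\langle B,C\rangle=\langle C,A\rangle$; its centroid is $(A+B+C)/\sqrt{-\langle A+B+C,A+B+C\rangle}$. *)

From HB Require Import structures.
From mathcomp Require Import all_boot all_order all_algebra.
From mathcomp Require Import reals.
Set Implicit Arguments. Unset Strict Implicit. Unset Printing Implicit Defensive.
Import Order.TTheory GRing.Theory Num.Theory.
Local Open Scope ring_scope.

Record vec3 (R : realType) := V3 { c1 : R; c2 : R; c3 : R }.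

Definition vadd (R : realType) (v w : vec3 R) : vec3 R :=
  V3 (c1 v + c1 w) (c2 v + c2 w) (c3 v + c3 w).
Definition vscale (R : realType) (a : R) (v : vec3 R) : vec3 R :=
  V3 (a * c1 v) (a * c2 v) (a * c3 v).

Definition mink (R : realType) (v w : vec3 R) : R :=
  - (c1 v * c1 w) + c2 v * c2 w + c3 v * c3 w.

Definition inH (R : realType) (P : vec3 R) : Prop :=
  mink P P = -1 /\ 1 <= c1 P.

Definition ecross (R : realType) (v w : vec3 R) : vec3 R :=
  V3 (c2 v * c3 w - c3 v * c2 w)
     (c3 v * c1 w - c1 v * c3 w)
     (c1 v * c2 w - c2 v * c1 w).
Definition Jmap (R : realType) (v : vec3 R) : vec3 R := V3 (- c1 v) (c2 v) (c3 v).
Definition lcross (R : realType) (v w : vec3 R) : vec3 R := Jmap (ecross v w).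

Definition equilateral (R : realType) (A B C : vec3 R) : Prop :=
  mink A B = mink B C /\ mink B C = mink C A.

Definition centroid (R : realType) (A B C : vec3 R) : vec3 R :=
  let S := vadd (vadd A B) C in
  vscale (Num.sqrt (- mink S S))^-1 S.

(* Up to the positive factor [3 (1 - <P0,P1>) (1 - <P1,P2>)], [<R2,R0>] is
   the Minkowski product of the two numerators in the centroid formulas.
   Expanding it bilinearly, four kinds of terms appear: [<P0+P1,P1+P2>],
   which is [alpha] because [<P1,P1> = -1]; two mixed terms, which are both
   [chi] because [P ~x Q] is orthogonal to [P] and [Q] and the triple product
   [<P ~x Q, S>] is cyclic; and [<P0 ~x P1, P1 ~x P2>], which the Lorentzian
   Binet-Cauchy identity evaluates to [-(<P0,P1><P1,P2> + <P0,P2>)].  The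
   denominators do not vanish since [<P,Q> <= -1] on the hyperboloid. *)

From HB Require Import structures.
From mathcomp Require Import all_boot all_order all_algebra.
From mathcomp Require Import reals.
From mathcomp Require Import ring lra.
Set Implicit Arguments.
Unset Strict Implicit.
Unset Printing Implicit Defensive.

Import Order.TTheory GRing.Theory Num.Theory.
Local Open Scope ring_scope.

Section MinkowskiAlgebra.
Context {R : realType}.
Implicit Types (u v w x : vec3 R) (k : R).

Lemma minkC u v : mink u v = mink v u.
Proof. by case: u => ? ? ?; case: v => ? ? ?; rewrite /mink /=; ring. Qed.

Lemma minkDl u v w : mink (vadd u v) w = mink u w + mink v w.
Proof.
by case: u => ? ? ?; case: v => ? ? ?; case: w => ? ? ?; rewrite /mink /=; ring.
Qed.

Lemma minkDr u v w : mink u (vadd v w) = mink u v + mink u w.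
Proof. by rewrite minkC minkDl !(minkC u). Qed.

Lemma minkZl k u v : mink (vscale k u) v = k * mink u v.
Proof. by case: u => ? ? ?; case: v => ? ? ?; rewrite /mink /=; ring. Qed.

Lemma minkZr k u v : mink u (vscale k v) = k * mink u v.
Proof. by rewrite minkC minkZl minkC. Qed.

Lemma mink_lcross_l u v : mink (lcross u v) u = 0.
Proof. by case: u => ? ? ?; case: v => ? ? ?; rewrite /mink /=; ring. Qed.

Lemma mink_lcross_r u v : mink (lcross u v) v = 0.
Proof. by case: u => ? ? ?; case: v => ? ? ?; rewrite /mink /=; ring. Qed.

(* [J] cancels against the form: [<u ~x v, w>] is the determinant [det(u,v,w)]. *)
Lemma mink_lcross_cycle u v w : mink (lcross u v) w = mink u (lcross v w).
Proof.
by case: u => ? ? ?; case: v => ? ? ?; case: w => ? ? ?; rewrite /mink /=; ring.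
Qed.

Lemma mink_lcross2 u v w x :
  mink (lcross u v) (lcross w x) = mink u x * mink v w - mink u w * mink v x.
Proof.
case: u => ? ? ?; case: v => ? ? ?; case: w => ? ? ?; case: x => ? ? ?.
by rewrite /mink /=; ring.
Qed.

Lemma mink_centroid_numerators (P0 P1 P2 : vec3 R) (e0 e2 s t : R) :
  mink P1 P1 = -1 ->
  mink (vadd (vscale s (vadd P0 P1)) (vscale e2 (lcross P0 P1)))
       (vadd (vscale t (vadd P1 P2)) (vscale e0 (lcross P1 P2))) =
  (-1 + mink P0 P1 + mink P1 P2 + mink P2 P0) * s * t
    + mink (lcross P0 P1) P2 * (e0 * s + e2 * t)
    - e2 * e0 * (mink P0 P1 * mink P1 P2 + mink P0 P2).
Proof.
move=> P1_unit.
rewrite !(minkDl, minkDr, minkZl, minkZr) mink_lcross2.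
rewrite mink_lcross_r (minkC P1 (lcross _ _)) mink_lcross_l -mink_lcross_cycle.
rewrite (minkC P2 P0) P1_unit.
ring.
Qed.

Lemma inH_mink_le_N1 (P Q : vec3 R) : inH P -> inH Q -> mink P Q <= -1.
Proof.
case: P => x y z; case: Q => u v w; rewrite /inH /mink /= => -[hP hx] [hQ hu].
have xu_ge0 : 0 <= x * u by apply: mulr_ge0; lra.
have reverse_CS : (1 + y * v + z * w) ^+ 2 <= (x * u) ^+ 2.
  rewrite -subr_ge0.
  have -> : (x * u) ^+ 2 - (1 + y * v + z * w) ^+ 2
            = (y - v) ^+ 2 + (z - w) ^+ 2 + (y * w - z * v) ^+ 2.
    rewrite exprMn.
    have -> : x ^+ 2 = 1 + y * y + z * z by rewrite expr2; lra.
    have -> : u ^+ 2 = 1 + v * v + w * w by rewrite expr2; lra.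
    by ring.
  by rewrite !addr_ge0 // sqr_ge0.
suff : 1 + y * v + z * w <= x * u by lra.
have [|pos] := lerP (1 + y * v + z * w) 0; first lra.
by rewrite -(ler_pXn2r (n := 2)) // nnegrE ltW.
Qed.

End MinkowskiAlgebra.

Theorem lemma3p1 (R : realType) (P0 P1 P2 Q0 Q2 : vec3 R) (e0 e2 : R) :
  inH P0 -> inH P1 -> inH P2 ->
  P0 <> P1 -> P1 <> P2 -> P0 <> P2 ->
  inH Q0 -> inH Q2 ->
  equilateral P0 P1 Q2 -> equilateral P1 P2 Q0 ->
  (e0 = 1 \/ e0 = -1) -> (e2 = 1 \/ e2 = -1) ->
  centroid P0 P1 Q2 =
    vscale (Num.sqrt 3 * (1 - mink P0 P1))^-1
      (vadd (vscale (Num.sqrt (1 - 2 * mink P0 P1)) (vadd P0 P1))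
            (vscale e2 (lcross P0 P1))) ->
  centroid P1 P2 Q0 =
    vscale (Num.sqrt 3 * (1 - mink P1 P2))^-1
      (vadd (vscale (Num.sqrt (1 - 2 * mink P1 P2)) (vadd P1 P2))
            (vscale e0 (lcross P1 P2))) ->
  let alpha := -1 + mink P0 P1 + mink P1 P2 + mink P2 P0 in
  let chi := mink (lcross P0 P1) P2 in
  let R2 := centroid P0 P1 Q2 in
  let R0 := centroid P1 P2 Q0 in
  3 * (1 - mink P0 P1) * (1 - mink P1 P2) * mink R2 R0 =
    alpha * Num.sqrt (1 - 2 * mink P0 P1) * Num.sqrt (1 - 2 * mink P1 P2)
    + chi * (e0 * Num.sqrt (1 - 2 * mink P0 P1) + e2 * Num.sqrt (1 - 2 * mink P1 P2))
    - e2 * e0 * (mink P0 P1 * mink P1 P2 + mink P0 P2).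
Proof.
(* Given the centroid formulas, the identity no longer uses Q0, Q2 or the signs. *)
move=> H0 H1 H2 _ _ _ _ _ _ _ _ _ -> -> alpha chi R2 R0.
have P1_unit : mink P1 P1 = -1 by case: H1.
have a_lt1 : mink P0 P1 < 1 by have := inH_mink_le_N1 H0 H1; lra.
have b_lt1 : mink P1 P2 < 1 by have := inH_mink_le_N1 H1 H2; lra.
have sqrt3_sq : Num.sqrt (3 : R) ^+ 2 = 3 by rewrite sqr_sqrtr.
have sqrt3_neq0 : Num.sqrt (3 : R) != 0 by rewrite sqrtr_eq0 -ltNge.
rewrite /R2 /R0 minkZl minkZr mink_centroid_numerators // /alpha /chi.
set sqrt3 := Num.sqrt (3 : R) in sqrt3_sq sqrt3_neq0 *.
rewrite -sqrt3_sq; field.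
by rewrite sqrt3_neq0 !subr_eq0 !(eq_sym 1) !lt_eqF.
Qed.
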